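(* Let $X$ be a finite set and let $\tau\subseteq\binom{X}{2}$ be non-empty with $L(\tau)=X$. Then $\tau$ is thin (i.e. $|L(\tau')|\ge|\tau'|+1$ for every non-empty $\tau'\subseteq\tau$) if and only if the bipartite graph $G(\tau)$ is a forest.
   Context: $L(\tau)=\bigcup_{s\in\tau}s$. $G(\tau)$ is the bipartite graph with vertex set $\tau\cup L(\tau)$ (the two sides) in which $t\in\tau$ and $x\in L(\tau)$ are adjacent if and only if $x\in t$. *)

From mathcomp Require Import all_boot.
Set Implicit Arguments. Unset Strict Implicit. Unset Printing Implicit Defensive.

Definition L (X : finType) (tau : {set {set X}}) : {set X} :=
  \bigcup_(s in tau) s.

Definition thin (X : finType) (tau : {set {set X}}) : Prop :=
  forall tau' : {set {set X}}, tau' \subset tau -> tau' != set0 ->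
    #|tau'| + 1 <= #|L tau'|.

(* Vertices of G(tau): left side = members of tau (inl), right side = points of L(tau) (inr). *)
Definition Gvertex (X : finType) := ({set X} + X)%type.

Definition Gvert (X : finType) (tau : {set {set X}}) (v : Gvertex X) : bool :=
  match v with
  | inl t => t \in tau
  | inr x => x \in L tau
  end.

Definition Gadj (X : finType) (tau : {set {set X}}) : rel (Gvertex X) :=
  fun u v =>
    match u, v with
    | inl t, inr x => [&& t \in tau, x \in L tau & x \in t]
    | inr x, inl t => [&& t \in tau, x \in L tau & x \in t]
    | _, _ => false
    end.

Definition has_cycle (X : finType) (tau : {set {set X}}) : Prop :=
  exists c : seq (Gvertex X),
    [/\ 3 <= size c, uniq c, all (Gvert tau) c & cycle (Gadj tau) c].

Definition Gforest (X : finType) (tau : {set {set X}}) : Prop := ~ has_cycle tau.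

From mathcomp Require Import all_boot zify.
Set Implicit Arguments. Unset Strict Implicit. Unset Printing Implicit Defensive.

(* A cycle of G(tau) alternates between members and points.  Each member on it
   is a 2-set, hence consists exactly of its two neighbours on the cycle, so
   the members on the cycle cover only the points on the cycle, and these are
   no more numerous than the members: thinness fails.  Conversely, let sigma be
   a non-empty subfamily with |L(sigma)| <= |sigma|.  A point lying in a single
   member e can be deleted together with e without losing this deficiency; once
   every point lies in two members, every vertex of G(sigma) has degree at
   least 2, and a longest path in G(sigma) closes up into a cycle. *)

Lemma prev_neq_next (T : eqType) (c : seq T) (v : T) :
  uniq c -> 3 <= size c -> v \in c -> prev c v != next c v.
Proof.
move=> c_uniq c_size /rot_to[i s c_rot].
rewrite -(prev_rot i c_uniq) -(next_rot i c_uniq) c_rot.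
have : 3 <= size (v :: s) by rewrite -c_rot size_rot.
have : uniq (v :: s) by rewrite -c_rot rot_uniq.
case: s {c_rot} => [|a [|b s]] // vabs_uniq _; apply/eqP => prev_eq_next.
have := next_prev vabs_uniq v; rewrite prev_eq_next /= eqxx.
move: vabs_uniq; rewrite /= !inE eq_sym => /andP[/norP[/negbTE-> /norP[vb _]] _].
by rewrite eqxx => bv; rewrite bv eqxx in vb.
Qed.

Section MinDegreeCycle.

Variables (V : finType) (e : rel V).
Hypotheses (e_sym : symmetric e) (e_irr : irreflexive e).

Lemma cycle_of_chord (x w : V) (s : seq V) :
  uniq (x :: s) -> path e x s -> e x w -> w \in s -> w != head x s ->
  exists c, [/\ 3 <= size c, uniq c, {subset c <= x :: s} & cycle e c].
Proof.
move=> + + xw w_s; case/splitPr: w_s => s1 s2; case: s1 => [|a s1]; first by rewrite /= eqxx.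
rewrite -cat_rcons => xs_uniq xs_path _.
exists (x :: rcons (a :: s1) w); split.
- by rewrite /= size_rcons.
- by move: xs_uniq; rewrite -cat_cons cat_uniq => /andP[].
- by move=> y y_in; rewrite -cat_cons mem_cat y_in.
- rewrite /cycle rcons_path last_rcons e_sym xw andbT.
  by move: xs_path; rewrite cat_path => /andP[].
Qed.

Lemma cycle_of_min_degree2 (S : {set V}) :
  S != set0 -> {in S, forall v, 1 < #|[set w in S | e v w]|} ->
  exists c, [/\ 3 <= size c, uniq c, {subset c <= S} & cycle e c].
Proof.
move=> /set0Pn[v0 v0S] deg2.
have neighbour_avoiding v u : v \in S -> exists2 w, w \in S & e v w && (w != u).
  move=> /deg2/card_gt1P[w1 [w2 []]]; rewrite !inE => /andP[w1S vw1] /andP[w2S vw2].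
  have [<- w12 | w1u _] := eqVneq w1 u; last by exists w1; rewrite ?vw1.
  by exists w2; rewrite // vw2 eq_sym.
suff grow n x s : #|V| - size s < n -> uniq (x :: s) -> {subset x :: s <= S} ->
    path e x s -> exists c, [/\ 3 <= size c, uniq c, {subset c <= S} & cycle e c].
  by apply: (grow _ v0 [::] (ltnSn _)) => // y; rewrite inE => /eqP->.
elim: n x s => // n IH x s bound xs_uniq xs_S xs_path.
have [w wS /andP[xw w_new]] := neighbour_avoiding x (head x s) (xs_S x (mem_head x s)).
have [w_old | w_fresh] := boolP (w \in x :: s).
  have w_s : w \in s by move: w_old; rewrite inE => /predU1P[wx|//]; rewrite wx e_irr in xw.
  have [c [c_size c_uniq c_sub c_cycle]] := cycle_of_chord xs_uniq xs_path xw w_s w_new.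
  by exists c; split=> // y /c_sub/xs_S.
apply: (IH w (x :: s)); rewrite /= ?w_fresh ?xs_uniq ?xs_path 1?e_sym ?xw //.
- have : size (x :: s) <= #|V| by move/card_uniqP: xs_uniq => <-; apply: max_card.
  move: bound => /=; lia.
- by move=> y; rewrite inE => /predU1P[-> //|/xs_S].
Qed.

End MinDegreeCycle.

Lemma L_subset (X : finType) (sigma tau : {set {set X}}) :
  sigma \subset tau -> L sigma \subset L tau.
Proof. by move=> /subsetP sub; apply/bigcupsP => t /sub; apply: bigcup_sup. Qed.

Lemma mem_L (X : finType) (tau : {set {set X}}) (t : {set X}) (x : X) :
  t \in tau -> x \in t -> x \in L tau.
Proof. by move=> tt xt; apply/bigcupP; exists t. Qed.

Lemma Gadj_sym (X : finType) (tau : {set {set X}}) : symmetric (Gadj tau).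
Proof. by case=> [?|?] [?|?]. Qed.

Lemma Gadj_irr (X : finType) (tau : {set {set X}}) : irreflexive (Gadj tau).
Proof. by case. Qed.

Lemma Gadj_inl (X : finType) (tau : {set {set X}}) (t : {set X}) (v : Gvertex X) :
  Gadj tau (inl t) v = if v is inr x then (t \in tau) && (x \in t) else false.
Proof.
case: v => //= x; case: (boolP (t \in tau)) => //= tt.
by case: (boolP (x \in t)) => xt; rewrite ?(mem_L tt xt) ?andbF.
Qed.

Lemma card_cycle_points_le_members (X : finType) (tau : {set {set X}}) (c : seq (Gvertex X)) :
  uniq c -> cycle (Gadj tau) c ->
  #|[set x | inr x \in c]| <= #|[set t | inl t \in c]|.
Proof.
move=> c_uniq c_cycle.
pose f x := if next c (inr x) is inl t then t else set0.
have next_inr x : inr x \in c -> next c (inr x) = inl (f x).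
  by move=> /(next_cycle c_cycle); rewrite /f; case: (next c (inr x)).
rewrite -(@card_in_imset _ _ f).
  apply/subset_leq_card/subsetP => t /imsetP[x]; rewrite inE => xc ->.
  by rewrite inE -next_inr // mem_next.
move=> x y; rewrite !inE => xc yc fxy.
by have := prev_next c_uniq (inr x); rewrite next_inr // fxy -next_inr // prev_next // => -[].
Qed.

Definition point_degree (X : finType) (tau : {set {set X}}) (x : X) : nat :=
  #|[set t in tau | x \in t]|.

Lemma leaf_member (X : finType) (tau : {set {set X}}) (x : X) :
  x \in L tau -> point_degree tau x <= 1 ->
  exists2 e, e \in tau & {in tau, forall t : {set X}, x \in t -> t = e}.
Proof.
move=> /bigcupP[e ee xe] /card_le1_eqP deg1.
by exists e => // t tt xt; apply: deg1; rewrite inE ?tt ?ee.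
Qed.

Lemma L_setD1_leaf (X : finType) (tau : {set {set X}}) (e : {set X}) (x : X) :
  {in tau, forall t : {set X}, x \in t -> t = e} -> L (tau :\ e) \subset L tau :\ x.
Proof.
move=> leaf; apply/bigcupsP => t; rewrite !inE => /andP[te tt]; apply/subsetP => y yt.
rewrite !inE (mem_L tt yt) andbT; apply: contraNneq te => yx.
by rewrite (leaf t) // -yx.
Qed.

Section PairFamilies.

Variables (X : finType) (tau : {set {set X}}).
Hypothesis tau_pairs : forall t, t \in tau -> #|t| = 2.

Lemma L_cycle_members_subset (c : seq (Gvertex X)) :
  uniq c -> 3 <= size c -> cycle (Gadj tau) c ->
  L [set t | inl t \in c] \subset [set x | inr x \in c].
Proof.
move=> c_uniq c_size c_cycle; apply/bigcupsP => t; rewrite inE => tc.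
have := prev_neq_next c_uniq c_size tc.
have := mem_prev c (inl t); have := mem_next c (inl t); rewrite tc.
have := next_cycle c_cycle tc; have := prev_cycle c_cycle tc.
rewrite Gadj_sym !Gadj_inl.
case: (prev c (inl t)) => // a /andP[tt a_t]; case: (next c (inl t)) => // b /andP[_ b_t].
move=> bc ac ab; apply/subsetP => y.
have -> : t = [set a; b].
  apply/eqP; rewrite eq_sym eqEcard subUset !sub1set a_t b_t cards2 tau_pairs //.
  by rewrite ab.
by rewrite !inE => /pred2P[]->.
Qed.

Lemma thin_Gforest : thin tau -> Gforest tau.
Proof.
move=> tau_thin [c [c_size c_uniq c_G c_cycle]].
set members := [set t | inl t \in c].
have members_sub : members \subset tau.
  by apply/subsetP => t; rewrite inE => /(allP c_G).
have members_nonempty : members != set0.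
  have [v vc] : exists v, v \in c by case: (c) c_size => // v c' _; exists v; apply: mem_head.
  apply/set0Pn; case: v vc => [t tc | x xc]; first by exists t; rewrite inE.
  have := next_cycle c_cycle xc; rewrite -(mem_next c) in xc.
  by case: (next c (inr x)) xc => // t tc _; exists t; rewrite inE.
have L_le_members : #|L members| <= #|members|.
  exact: leq_trans (subset_leq_card (L_cycle_members_subset c_uniq c_size c_cycle))
                   (card_cycle_points_le_members c_uniq c_cycle).
by have := leq_trans (tau_thin _ members_sub members_nonempty) L_le_members; rewrite addn1 ltnn.
Qed.

Lemma has_cycle_of_min_degree2 (sigma : {set {set X}}) :
  sigma \subset tau -> sigma != set0 ->
  {in L sigma, forall x, 1 < point_degree sigma x} -> has_cycle tau.
Proof.
move=> sub sigma_nonempty deg2.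
have sub_tau := subsetP sub; have sub_L := subsetP (L_subset sub).
have [||c [c_size c_uniq c_sub c_cycle]] :=
  cycle_of_min_degree2 (Gadj_sym tau) (Gadj_irr tau) (S := [set v | Gvert sigma v]).
- by case/set0Pn: sigma_nonempty => t st; apply/set0Pn; exists (inl t); rewrite inE.
- case=> [t|x]; rewrite inE /= => v_in; apply/card_gt1P.
  + have /cards2P[a [b [ab t_ab]]] : #|t| == 2 by rewrite tau_pairs ?sub_tau.
    have a_t : a \in t by rewrite t_ab !inE eqxx.
    have b_t : b \in t by rewrite t_ab !inE eqxx orbT.
    have tt := sub_tau t v_in.
    exists (inr a), (inr b); rewrite !inE /= tt a_t b_t ab.
    by rewrite (mem_L v_in a_t) (mem_L v_in b_t) (mem_L tt a_t) (mem_L tt b_t).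
  + have /card_gt1P[t1 [t2 []]] := deg2 x v_in.
    rewrite !inE => /andP[t1s x_t1] /andP[t2s x_t2] t12.
    by exists (inl t1), (inl t2); rewrite !inE /= t1s t2s !sub_tau // sub_L // x_t1 x_t2.
- exists c; split=> //; apply/allP => v /c_sub; rewrite inE.
  by case: v => [t /sub_tau | x /sub_L].
Qed.

Lemma has_cycle_of_deficient (sigma : {set {set X}}) :
  sigma \subset tau -> sigma != set0 -> #|L sigma| <= #|sigma| -> has_cycle tau.
Proof.
have [n] := ubnP #|sigma|; elim: n sigma => // n IH sigma size_lt sub nonempty deficient.
have [deg2 | /forall_inPn[x xL]] :=
  boolP [forall (x | x \in L sigma), 1 < point_degree sigma x].
  by apply: has_cycle_of_min_degree2 sub nonempty _; apply/forall_inP.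
rewrite -leqNgt => /(leaf_member xL)[e es leaf].
have card_sigma : #|sigma| = (#|sigma :\ e|).+1 by rewrite (cardsD1 e) es.
have card_L : #|L sigma| = (#|L sigma :\ x|).+1 by rewrite (cardsD1 x) xL.
apply: (IH (sigma :\ e)).
- by rewrite -ltnS -card_sigma.
- exact: subset_trans (subD1set _ _) sub.
- apply: contraTneq deficient => rest0; rewrite card_sigma rest0 cards0 -ltnNge.
  by rewrite -(tau_pairs (subsetP sub e es)); apply/subset_leq_card/bigcup_sup.
- move: deficient; rewrite card_sigma card_L ltnS; apply: leq_trans.
  exact/subset_leq_card/L_setD1_leaf.
Qed.

End PairFamilies.

Theorem corollary2 (X : finType) (tau : {set {set X}}) :
  (forall t, t \in tau -> #|t| = 2) ->
  tau != set0 ->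
  L tau = setT ->
  thin tau <-> Gforest tau.
Proof.
move=> tau_pairs _ _; split; first exact: thin_Gforest.
move=> forest sigma sub nonempty; rewrite leqNgt addn1 ltnS; apply/negP => deficient.
exact/forest/(has_cycle_of_deficient tau_pairs sub nonempty deficient).
Qed.
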